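(* Let $S\subseteq\mathbb{R}^{n_1}\times\dots\times\mathbb{R}^{n_m}\times\mathbb{R}^p$, with elements written $(x^1,\dots,x^m,z)$. (1) If $S$ is permutation-invariant with respect to $x^k$ for every $k=1,\dots,m$, then $\mathrm{conv}(S)=\{(x^1,\dots,x^m,z)\mid \exists u^1,\dots,u^m:\ (u^1,\dots,u^m,z)\in\mathrm{conv}(S_0),\ u^k\ge_m x^k,\ k=1,\dots,m\}$, where $S_0=S\cap(\Delta^{n_1}\times\dots\times\Delta^{n_m}\times\mathbb{R}^p)$. (2) If $S$ is sign-invariant with respect to $x^k$ for every $k$, then $\mathrm{conv}(S)=\{(x^1,\dots,x^m,z)\mid \exists u^1,\dots,u^m:\ (u^1,\dots,u^m,z)\in\mathrm{conv}(S_0),\ u^k\ge|x^k|,\ k=1,\dots,m\}$, where $S_0=S\cap(\mathbb{R}^{n_1}_+\times\dots\times\mathbb{R}^{n_m}_+\times\mathbb{R}^p)$. (3) If $S$ is both permutation-invariant and sign-invariant with respect to $x^k$ for every $k$, then $\mathrm{conv}(S)=\{(x^1,\dots,x^m,z)\mid \exists u^1,\dots,u^m:\ (u^1,\dots,u^m,z)\in\mathrm{conv}(S_0),\ u^k\ge_{wm}|x^k|,\ k=1,\dots,m\}$, where $S_0=S\cap\{(u^1,\dots,u^m,z)\mid u^k_1\ge\dots\ge u^k_{n_k}\ge 0,\ k=1,\dots,m\}$.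
   Context: $\Delta^n=\{x\in\mathbb{R}^n\mid x_1\ge\dots\ge x_n\}$. $S$ is permutation-invariant with respect to $x^k$ if replacing $x^k$ by $Px^k$, for any $n_k\times n_k$ permutation matrix $P$, keeps the point in $S$; it is sign-invariant with respect to $x^k$ if replacing $x^k$ by any $\bar x^k$ with $|\bar x^k|=|x^k|$ (componentwise absolute value) keeps the point in $S$. For $x\in\mathbb{R}^n$, $x_{[i]}$ is the $i$-th largest component. $x\ge_m y$ means $\sum_{i=1}^j x_{[i]}\ge\sum_{i=1}^j y_{[i]}$ for $j<n$ with equality for $j=n$; $x\ge_{wm}y$ means $\sum_{i=1}^j x_{[i]}\ge\sum_{i=1}^j y_{[i]}$ for all $j=1,\dots,n$. Inequalities between vectors are componentwise. *)

(* Points of R^{n_1} x ... x R^{n_m} x R^p are pairs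
   (x, z) with x k : 'I_(n k) -> R the block x^k and z : 'I_p -> R. *)
From HB Require Import structures.
From mathcomp Require Import all_boot all_order all_algebra all_fingroup.
Set Implicit Arguments. Unset Strict Implicit. Unset Printing Implicit Defensive.
Import Order.TTheory GRing.Theory Num.Theory.
Local Open Scope ring_scope.

Section Defs.
Variables (R : realFieldType) (m : nat) (n : 'I_m -> nat) (p : nat).

Definition point : Type := ((forall k : 'I_m, 'I_(n k) -> R) * ('I_p -> R))%type.

Definition conv (S : point -> Prop) (y : point) : Prop :=
  exists (N : nat) (l : 'I_N -> R) (s : 'I_N -> point),
    [/\ (forall i, 0 <= l i), \sum_(i < N) l i = 1, (forall i, S (s i)),
        (forall k j, y.1 k j = \sum_(i < N) l i * (s i).1 k j) &
        (forall j, y.2 j = \sum_(i < N) l i * (s i).2 j)].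

Definition perm_invariant (S : point -> Prop) (k : 'I_m) : Prop :=
  forall y y' : point, S y ->
    (forall k', k' != k -> forall j, y'.1 k' j = y.1 k' j) ->
    (forall j, y'.2 j = y.2 j) ->
    (exists s : 'S_(n k), forall j, y'.1 k j = y.1 k (s j)) ->
    S y'.

Definition sign_invariant (S : point -> Prop) (k : 'I_m) : Prop :=
  forall y y' : point, S y ->
    (forall k', k' != k -> forall j, y'.1 k' j = y.1 k' j) ->
    (forall j, y'.2 j = y.2 j) ->
    (forall j, `|y'.1 k j| = `|y.1 k j|) ->
    S y'.
End Defs.
Arguments point : clear implicits.

(* x_[i] : i-th largest component (0-based index i) *)
Definition sorted_desc (R : realFieldType) (q : nat) (x : 'I_q -> R) : seq R :=
  sort (fun a b : R => b <= a) [seq x i | i <- enum 'I_q].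

Definition topsum (R : realFieldType) (q : nat) (x : 'I_q -> R) (j : nat) : R :=
  \sum_(i < j) nth 0 (sorted_desc x) i.

Definition majorizes (R : realFieldType) (q : nat) (x y : 'I_q -> R) : Prop :=
  (forall j, (j < q)%N -> topsum y j <= topsum x j) /\ topsum x q = topsum y q.

Definition wmajorizes (R : realFieldType) (q : nat) (x y : 'I_q -> R) : Prop :=
  forall j, (j <= q)%N -> topsum y j <= topsum x j.

Definition in_Delta (R : realFieldType) (q : nat) (x : 'I_q -> R) : Prop :=
  forall i j : 'I_q, (i <= j)%N -> x j <= x i.

(* Normalising a block of a point of S (sorting it, replacing it by its absolute
   values, or both) keeps the point in S, and a convex combination of blocks is
   majorized, resp. dominated, by the same combination of their normalisations;
   this gives the inclusion of conv S in the right-hand sides.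
   Conversely, fix a point w of conv S and a block k: the blocks c such that
   replacing block k of w by c stays in conv S form a convex set invariant under
   the symmetries of S. Such a set contains everything majorized by one of its
   elements: sign flips give every c with |c| <= |a|, and for sorted vectors
   Robin Hood transfers from an earlier to a later coordinate, each a convex
   combination with a transposed copy, turn a majorizing vector into one that
   dominates the majorized vector coordinatewise and has the same sum.
   Replacing the blocks one at a time gives the reverse inclusion. *)

From HB Require Import structures.
From mathcomp Require Import all_boot all_order all_algebra all_fingroup.
From mathcomp Require Import lra ring.
From Stdlib Require Import FunctionalExtensionality.
Set Implicit Arguments. Unset Strict Implicit. Unset Printing Implicit Defensive.
Import Order.TTheory GRing.Theory Num.Theory.
Local Open Scope ring_scope.

Section Rearrangement.
Variables (R : realFieldType) (q : nat).
Implicit Types (x y v : 'I_q -> R).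

Definition psum (j : nat) v : R := \sum_(i < q | (i < j)%N) v i.

Definition dsort x : 'I_q -> R := fun i => nth 0 (sorted_desc x) i.

Lemma dsort_perm x : exists s : 'S_q, dsort x = (fun i => x (s i)).
Proof.
have pe : perm_eq (sorted_desc x) (map_tuple x (ord_tuple q)).
  by rewrite /sorted_desc perm_sort; exact: perm_refl.
have [s hs] := tuple_permP pe; exists s; apply: functional_extensionality => i.
rewrite /dsort hs /= (nth_map i) ?size_enum_ord // nth_ord_enum.
by rewrite tnth_map tnth_ord_tuple.
Qed.

Lemma dsort_Delta x : in_Delta (dsort x).
Proof.
move=> i j ij; rewrite /dsort.
have st : sorted (fun a b : R => b <= a) (sorted_desc x).
  by apply: sort_sorted => a b; exact: le_total.
have tr : transitive (fun a b : R => b <= a) by move=> a b c ba cb; exact: le_trans cb ba.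
by apply: (sorted_leq_nth tr _ 0 st); rewrite // inE size_sort size_map size_enum_ord.
Qed.

Lemma dsort_ge0 x : (forall i, 0 <= x i) -> forall i, 0 <= dsort x i.
Proof. by move=> x_ge0 i; have [s ->] := dsort_perm x. Qed.

Lemma topsum_dsort x j : (j <= q)%N -> topsum x j = psum j (dsort x).
Proof. by move=> jq; rewrite /topsum (big_ord_widen _ _ jq). Qed.

Lemma psum_full v : psum q v = \sum_i v i.
Proof. by apply: eq_bigl => i; rewrite ltn_ord. Qed.

Lemma card_prefix j : (j <= q)%N -> #|[set i : 'I_q | (i < j)%N]| = j.
Proof.
move=> jq; rewrite -sum1_card (eq_bigl (fun i : 'I_q => (i < j)%N)) => [|i]; last by rewrite inE.
by rewrite -(big_ord_widen _ (fun _ => 1%N) jq) sum1_card card_ord.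
Qed.

(* Exchange argument: each index of B outside the first #|B| ones can be
   matched with a missing index among them, whose entry is at least as large. *)
Lemma sum_le_psum_card v (B : {set 'I_q}) : in_Delta v ->
  \sum_(i in B) v i <= psum #|B| v.
Proof.
move=> Dv; have := max_card B; rewrite card_ord.
case cB: #|B| => [|j] jq.
  by rewrite (cards0_eq cB) big_set0 /psum big1.
set A := [set i : 'I_q | (i < j.+1)%N].
rewrite (_ : psum _ _ = \sum_(i in A) v i); last by apply: eq_bigl => i; rewrite inE.
rewrite (big_setID A) [X in _ <= X](big_setID B) /= setIC lerD2l.
set c := v (Ordinal jq).
have cD : #|B :\: A| = #|A :\: B| by rewrite !cardsD cB card_prefix // setIC.
apply: (@le_trans _ _ (c *+ #|B :\: A|)).
  rewrite -sumr_const; apply: ler_sum => i; rewrite /A !inE -leqNgt => /andP[ji _].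
  by apply: Dv; exact: ltnW.
rewrite cD -sumr_const; apply: ler_sum => i; rewrite /A !inE => /andP[_ ij].
by apply: Dv; rewrite /= -ltnS.
Qed.

Lemma psum_perm_le v (s : 'S_q) j : in_Delta v -> (j <= q)%N ->
  psum j (fun i => v (s i)) <= psum j v.
Proof.
move=> Dv jq; set B := [set i | ((s^-1)%g i < j)%N].
have cB : #|B| = j.
  rewrite -sum1_card (reindex_inj (@perm_inj _ s)) /=.
  rewrite (eq_bigl (fun i : 'I_q => (i < j)%N)) => [|i]; last by rewrite !inE permK.
  by rewrite -(big_ord_widen _ (fun _ => 1%N) jq) sum1_card card_ord.
have -> : psum j (fun i => v (s i)) = \sum_(i in B) v i.
  rewrite /psum [RHS](reindex_inj (@perm_inj _ s)) /=.
  by apply: eq_bigl => i; rewrite inE permK.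
by rewrite -[X in _ <= psum X _]cB sum_le_psum_card.
Qed.

Lemma psum_perm_le_topsum x (s : 'S_q) j : (j <= q)%N ->
  psum j (fun i => x (s i)) <= topsum x j.
Proof.
move=> jq; have [r dsort_r] := dsort_perm x.
have -> : (fun i => x (s i)) = (fun i => dsort x ((s * r^-1)%g i)).
  by apply: functional_extensionality => i; rewrite dsort_r permM permKV.
by rewrite topsum_dsort //; apply: psum_perm_le (dsort_Delta x) jq.
Qed.

Lemma topsum_Delta v j : in_Delta v -> (j <= q)%N -> topsum v j = psum j v.
Proof.
move=> Dv jq; apply/le_anti/andP; split.
  by have [r dsort_r] := dsort_perm v; rewrite topsum_dsort // dsort_r psum_perm_le.
rewrite {1}(_ : v = (fun i => v ((1 : 'S_q)%g i))) ?psum_perm_le_topsum //.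
by apply: functional_extensionality => i; rewrite perm1.
Qed.

Lemma topsum_full x : topsum x q = \sum_i x i.
Proof.
have [r dsort_r] := dsort_perm x.
rewrite topsum_dsort // dsort_r psum_full.
by rewrite [RHS](reindex_inj (@perm_inj _ r)).
Qed.

Lemma sum_dsort x : \sum_i dsort x i = \sum_i x i.
Proof. by rewrite -psum_full -topsum_dsort // topsum_full. Qed.

Lemma ler_topsum x y j : (j <= q)%N -> (forall i, x i <= y i) ->
  topsum x j <= topsum y j.
Proof.
move=> jq le_xy; have [r dsort_r] := dsort_perm x.
rewrite topsum_dsort // dsort_r; apply: le_trans (psum_perm_le_topsum y r jq).
by apply: ler_sum => i _.
Qed.

Lemma psum_comb N (l : 'I_N -> R) (f : 'I_N -> 'I_q -> R) j :
  psum j (fun a => \sum_(i < N) l i * f i a) = \sum_(i < N) l i * psum j (f i).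
Proof. by rewrite /psum exchange_big; apply: eq_bigr => i _; rewrite mulr_sumr. Qed.

Lemma in_Delta_comb N (l : 'I_N -> R) (f : 'I_N -> 'I_q -> R) :
  (forall i, 0 <= l i) -> (forall i, in_Delta (f i)) ->
  in_Delta (fun a => \sum_(i < N) l i * f i a).
Proof. by move=> l_ge0 Df a b ab; apply: ler_sum => i _; rewrite ler_wpM2l ?Df. Qed.

Lemma topsum_comb_le N (l : 'I_N -> R) (f : 'I_N -> 'I_q -> R) j :
  (j <= q)%N -> (forall i, 0 <= l i) ->
  topsum (fun a => \sum_(i < N) l i * f i a) j <= \sum_(i < N) l i * topsum (f i) j.
Proof.
move=> jq l_ge0; have [r dsort_r] := dsort_perm (fun a => \sum_(i < N) l i * f i a).
rewrite topsum_dsort // dsort_r (psum_comb l (fun i a => f i (r a))).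
by apply: ler_sum => i _; rewrite ler_wpM2l ?psum_perm_le_topsum.
Qed.

Definition transfer v (j k : 'I_q) (d : R) : 'I_q -> R :=
  fun i => v i + (if i == k then d else 0) - (if i == j then d else 0).

Lemma transfer_donor v j k d : j != k -> transfer v j k d j = v j - d.
Proof. by move=> jk; rewrite /transfer eqxx (negbTE jk) addr0. Qed.

Lemma transfer_recipient v j k d : j != k -> transfer v j k d k = v k + d.
Proof. by move=> jk; rewrite /transfer eqxx eq_sym (negbTE jk) subr0. Qed.

Lemma transfer_other v j k d i : i != j -> i != k -> transfer v j k d i = v i.
Proof. by move=> ij ik; rewrite /transfer (negbTE ij) (negbTE ik) addr0 subr0. Qed.

Lemma psumS v (k : 'I_q) : psum k.+1 v = psum k v + v k.
Proof.
rewrite /psum (bigD1 k) //= addrC; congr (_ + _); apply: eq_bigl => i.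
by rewrite ltnS ltn_neqAle andbC.
Qed.

Lemma psum_le_donor x v (k : 'I_q) : (forall l : 'I_q, (l < k)%N -> x l <= v l) ->
  v k < x k -> psum k.+1 x <= psum k.+1 v -> exists2 j : 'I_q, (j < k)%N & x j < v j.
Proof.
move=> le_xv lt_k dom.
case: (boolP [exists j : 'I_q, (j < k)%N && (x j < v j)]) => [/existsP[j /andP[]]|/existsPn none].
  by exists j.
have eq_k : psum k v = psum k x.
  apply/eqP; rewrite -subr_eq0 /psum -sumrB; apply/eqP/big1 => l lk.
  by apply/eqP; rewrite subr_eq0 eq_le le_xv // andbT leNgt; move: (none l); rewrite lk.
by move: dom; rewrite !psumS eq_k lerD2l leNgt lt_k.
Qed.

Lemma psum_delta (j : 'I_q) (i : nat) (d : R) :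
  psum i (fun l => if l == j then d else 0) = if (j < i)%N then d else 0.
Proof.
rewrite /psum -big_mkcondr /=; case: ltnP => ji.
  by rewrite (big_pred1 j) // => l /=; apply/andP/eqP => [[_ /eqP]|->].
by rewrite big_pred0 // => l; apply/andP => -[li /eqP lj]; move: li; rewrite lj ltnNge ji.
Qed.

Lemma psum_transfer v j k d i : psum i (transfer v j k d) =
  psum i v + (if (k < i)%N then d else 0) - (if (j < i)%N then d else 0).
Proof. by rewrite /transfer /psum sumrB big_split /= -!/(psum _ _) !psum_delta. Qed.

Lemma psum_le_transfer x v (j k : 'I_q) d : (j < k)%N ->
  (forall l : 'I_q, (l < k)%N -> x l <= v l) -> d <= v j - x j ->
  (forall i, (i <= q)%N -> psum i x <= psum i v) ->
  forall i, (i <= q)%N -> psum i x <= psum i (transfer v j k d).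
Proof.
move=> jk le_xv d_le dom i iq; rewrite psum_transfer.
case: (ltnP j i) => ji; last first.
  have ik : (k < i)%N = false by rewrite ltnNge (leq_trans ji (ltnW jk)).
  by rewrite ik subr0 addr0 dom.
case: (ltnP k i) => ki; first by rewrite addrK dom.
rewrite addr0; suff : d <= psum i v - psum i x by lra.
rewrite /psum -sumrB (bigD1 j) //=; apply: le_trans d_le _; rewrite lerDl.
by apply: sumr_ge0 => l /andP[li _]; rewrite subr_ge0 le_xv // (leq_trans li ki).
Qed.

Lemma card_mismatch_lt (a a' x : 'I_q -> R) (i0 : 'I_q) :
  a i0 != x i0 -> a' i0 = x i0 -> (forall i, a' i != x i -> a i != x i) ->
  (#|[set i | a' i != x i]| < #|[set i | a i != x i]|)%N.
Proof.
move=> ne_a0 eq_a'0 sub; apply: proper_card; apply/properP; split.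
  by apply/subsetP => i; rewrite !inE; exact: sub.
by exists i0; rewrite !inE ?eq_a'0 ?eqxx.
Qed.

End Rearrangement.

Section ConvexVectors.
Variables (R : realFieldType) (q : nat) (C : ('I_q -> R) -> Prop).
Hypothesis convexC : forall a b t, C a -> C b -> 0 <= t <= 1 ->
  C (fun i => t * a i + (1 - t) * b i).

Section SignClosed.
Hypothesis flipC : forall a j0, C a -> C (fun i => (if i == j0 then -1 else 1) * a i).

Lemma sign_closed_set_coord a i0 d : C a -> `|d| <= `|a i0| ->
  C (fun i => if i == i0 then d else a i).
Proof.
move=> Ca le_da; have [a0|a0] := eqVneq (a i0) 0.
  move: le_da; rewrite a0 normr0 normr_le0 => /eqP d0.
  apply: (eq_ind a C Ca); apply: functional_extensionality => i.
  by case: eqP => // ->; rewrite a0 d0.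
have : `|d / a i0| <= 1 by rewrite normrM normrV ?unitfE // ler_pdivrMr ?normr_gt0 ?mul1r.
rewrite ler_norml => /andP[lb ub].
have t01 : 0 <= (1 + d / a i0) / 2 <= 1 by apply/andP; split; lra.
apply: (eq_ind _ C (convexC Ca (flipC i0 Ca) t01)).
apply: functional_extensionality => i.
by case: eqP => [->|_]; [field | ring].
Qed.

Lemma sign_closed_abs_le a c : C a -> (forall i, `|c i| <= `|a i|) -> C c.
Proof.
move=> Ca le_ca; have [N] := ubnP #|[set i | a i != c i]|.
elim: N a Ca le_ca => // N IH a Ca le_ca; rewrite ltnS => cardN.
have [/setP mis0|[i0]] := set_0Vmem [set i | a i != c i].
  apply: (eq_ind a C Ca); apply: functional_extensionality => i.
  by move: (mis0 i); rewrite !inE => /negbFE/eqP.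
rewrite inE => mis_i0; set a' := fun i => if i == i0 then c i0 else a i.
apply: (IH a'); first exact: sign_closed_set_coord.
  by move=> i; rewrite /a'; case: eqP => // ->.
apply: leq_trans cardN; apply: card_mismatch_lt mis_i0 _ _; first by rewrite /a' eqxx.
by move=> i; rewrite /a'; have [->|//] := eqVneq i i0; rewrite eqxx.
Qed.

End SignClosed.

Section PermClosed.
Hypothesis permC : forall a (s : 'S_q), C a -> C (fun i => a (s i)).

(* The transfer is the convex combination of [a] and [a] with [j], [k] swapped
   that puts weight [d / (a j - a k)] on the swapped vector. *)
Lemma perm_closed_transfer a (j k : 'I_q) d : C a -> a k < a j ->
  0 <= d <= a j - a k -> C (transfer a j k d).
Proof.
move=> Ca lt_kj /andP[d_ge0 d_le].
have jk : j != k by apply: contraTneq lt_kj => ->; rewrite ltxx.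
have gap : 0 < a j - a k by rewrite subr_gt0.
set e := d / (a j - a k).
have e01 : 0 <= 1 - e <= 1.
  have : e <= 1 by rewrite /e ler_pdivrMr // mul1r.
  have : 0 <= e by rewrite /e divr_ge0 // ltW.
  by move=> *; apply/andP; split; lra.
apply: (eq_ind _ C (convexC Ca (permC (tperm j k) Ca) e01)).
apply: functional_extensionality => i; rewrite /e.
have [->|ij] := eqVneq i j; first by rewrite transfer_donor // tpermL; field; rewrite gt_eqF.
have [->|ik] := eqVneq i k; first by rewrite transfer_recipient // tpermR; field; rewrite gt_eqF.
by rewrite transfer_other // tpermD 1?eq_sym //; ring.
Qed.

Lemma perm_closed_transfer_step x a : in_Delta x -> C a ->
  (forall j, (j <= q)%N -> psum j x <= psum j a) -> (exists i, a i < x i) ->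
  exists a', [/\ C a', (forall j, (j <= q)%N -> psum j x <= psum j a'),
    \sum_i a' i = \sum_i a i &
    (#|[set i | a' i != x i]| < #|[set i | a i != x i]|)%N].
Proof.
move=> Dx Ca dom [i0 lt_i0].
have [k lt_k kmin] := @arg_minnP _ i0 (fun i => a i < x i) (fun i => nat_of_ord i) lt_i0.
have le_before_k : forall l : 'I_q, (l < k)%N -> x l <= a l.
  by move=> l lk; rewrite leNgt; apply/negP => /kmin; rewrite leqNgt lk.
have [j jk lt_j] := psum_le_donor le_before_k lt_k (dom _ (ltn_ord k)).
have neq_jk : j != k by rewrite neq_ltn jk.
have le_kj : x k <= x j by apply: Dx; exact: ltnW.
have [d [d_gt0 d_j d_k d_match]] : exists d, [/\ 0 < d, d <= a j - x j,
    d <= x k - a k & a j - d = x j \/ a k + d = x k].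
  by case: (lerP (a j - x j) (x k - a k)) => h;
    [exists (a j - x j) | exists (x k - a k)]; split; rewrite ?subr_gt0 //; lra.
have lt_kj : a k < a j by lra.
exists (transfer a j k d); split.
- by apply: perm_closed_transfer => //; apply/andP; split; lra.
- exact: psum_le_transfer.
- by rewrite -!psum_full psum_transfer !ltn_ord /= addrK.
- have mis l : transfer a j k d l != x l -> a l != x l.
    have [->|lj] := eqVneq l j; first by rewrite (gt_eqF lt_j).
    have [->|lk] := eqVneq l k; first by rewrite (lt_eqF lt_k).
    by rewrite transfer_other.
  case: d_match => [dj|dk];
    [apply: (card_mismatch_lt (i0 := j)) | apply: (card_mismatch_lt (i0 := k))];
    by rewrite ?transfer_donor ?transfer_recipient ?(gt_eqF lt_j) ?(lt_eqF lt_k).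
Qed.

Lemma perm_closed_lift x a : in_Delta x -> C a ->
  (forall j, (j <= q)%N -> psum j x <= psum j a) ->
  exists b, [/\ C b, \sum_i b i = \sum_i a i & forall i, x i <= b i].
Proof.
move=> Dx Ca dom; have [N] := ubnP #|[set i | a i != x i]|.
elim: N a Ca dom => // N IH a Ca dom; rewrite ltnS => cardN.
case: (boolP [exists i, a i < x i]) => [/existsP lt_ax|/existsPn ge_ax].
  have [a' [Ca' dom' sum_a' card_a']] := perm_closed_transfer_step Dx Ca dom lt_ax.
  have [b [Cb sum_b le_xb]] := IH a' Ca' dom' (leq_trans card_a' cardN).
  by exists b; rewrite sum_b sum_a'.
by exists a; split => // i; rewrite leNgt ge_ax.
Qed.

Lemma perm_closed_dsortE a : C (dsort a) <-> C a.
Proof.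
have [s ->] := dsort_perm a; split=> [/(permC s^-1) Ca|/permC//].
by apply: (eq_ind _ C Ca); apply: functional_extensionality => i; rewrite permKV.
Qed.

Lemma perm_closed_majorized a c : C a -> majorizes a c -> C c.
Proof.
move=> Ca [dom eq_q]; apply/perm_closed_dsortE.
have dom' j : (j <= q)%N -> psum j (dsort c) <= psum j (dsort a).
  move=> jq; rewrite -!topsum_dsort //.
  by move: jq; rewrite leq_eqVlt => /orP[/eqP->|/dom]; rewrite ?eq_q.
have [b [Cb sum_b le_cb]] := perm_closed_lift (dsort_Delta c) ((perm_closed_dsortE a).2 Ca) dom'.
have : \sum_i (b i - dsort c i) = 0.
  by rewrite sumrB sum_b !sum_dsort -!topsum_full eq_q subrr.
move/psumr_eq0P => eq_bc; suff -> : dsort c = b by [].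
apply: functional_extensionality => i; apply/esym/eqP; rewrite -subr_eq0.
by apply/eqP/eq_bc => // l _; rewrite subr_ge0.
Qed.

End PermClosed.

Lemma sign_perm_closed_wmajorized
    (flipC : forall a j0, C a -> C (fun i => (if i == j0 then -1 else 1) * a i))
    (permC : forall a (s : 'S_q), C a -> C (fun i => a (s i))) a c :
  C a -> wmajorizes a (fun j => `|c j|) -> C c.
Proof.
move=> Ca dom; set c' := fun j => `|c j|.
have Ca' : C (fun j => `|a j|) by apply: sign_closed_abs_le Ca _ => // i; rewrite normr_id.
have dom' j : (j <= q)%N -> psum j (dsort c') <= psum j (dsort (fun j => `|a j|)).
  move=> jq; rewrite -!topsum_dsort //; apply: le_trans (dom j jq) _.
  by apply: ler_topsum => // i; exact: ler_norm.
have [b [Cb _ le_cb]] := perm_closed_lift permC (dsort_Delta c') ((perm_closed_dsortE permC _).2 Ca') dom'.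
have c'_ge0 : forall i, 0 <= dsort c' i by apply: dsort_ge0 => i; exact: normr_ge0.
have Cc' : C c'.
  apply/(perm_closed_dsortE permC); apply: sign_closed_abs_le Cb _ => // i.
  by rewrite !ger0_norm // (le_trans _ (le_cb i)).
by apply: sign_closed_abs_le Cc' _ => // i; rewrite normr_id.
Qed.

End ConvexVectors.

Section Blocks.
Variables (R : realFieldType) (m : nat) (n : 'I_m -> nat) (p : nat).
Local Notation pt := (point R m n p).
Implicit Types (S : pt -> Prop) (v w y : pt).

Definition upd_blk v (k : 'I_m) (f : 'I_(n k) -> R) : pt :=
  (fun k' => if k' =P k is ReflectT e then
               eq_rect_r (fun k0 => 'I_(n k0) -> R) f e else v.1 k', v.2).
Arguments upd_blk : clear implicits.

Lemma upd_blk_same v k f : (upd_blk v k f).1 k = f.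
Proof. by rewrite /upd_blk /=; case: eqP => // e; rewrite (eq_irrelevance e erefl). Qed.

Lemma upd_blk_other v k f k' : k' != k -> (upd_blk v k f).1 k' = v.1 k'.
Proof. by rewrite /upd_blk /=; case: eqP. Qed.

Lemma upd_blk_snd v k f : (upd_blk v k f).2 = v.2.
Proof. by []. Qed.

Lemma point_eq v w : (forall k, v.1 k = w.1 k) -> v.2 = w.2 -> v = w.
Proof.
by case: v w => v1 v2 [w1 w2] /= E1 ->; congr (_, _); apply: functional_extensionality_dep.
Qed.

Lemma upd_blk_id v k : upd_blk v k (v.1 k) = v.
Proof.
by apply: point_eq => // k'; have [->|ne] := eqVneq k' k; rewrite ?upd_blk_same ?upd_blk_other.
Qed.

Lemma upd_blk_upd v k f g : upd_blk (upd_blk v k f) k g = upd_blk v k g.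
Proof.
by apply: point_eq => // k'; have [->|ne] := eqVneq k' k; rewrite ?upd_blk_same ?upd_blk_other.
Qed.

Lemma blockwise_update (P : pt -> Prop) (u v : forall k, 'I_(n k) -> R) z :
  P (u, z) -> (forall w k, P w -> w.1 k = u k -> P (upd_blk w k (v k))) -> P (v, z).
Proof.
move=> P0 step.
suff /(_ m (leqnn m)) [w [Pw w2 Hw]] : forall r, (r <= m)%N -> exists w, [/\ P w, w.2 = z &
    forall k : 'I_m, w.1 k = if (k < r)%N then v k else u k].
  by rewrite -(@point_eq w (v, z)) // => k; rewrite Hw ltn_ord.
elim=> [_|r IH rm]; first by exists (u, z).
have [w [Pw w2 Hw]] := IH (ltnW rm); set kr := Ordinal rm.
exists (upd_blk w kr (v kr)); split => //.
  by apply: step; rewrite // Hw ltnn.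
move=> k; have [->|ne] := eqVneq k kr; first by rewrite upd_blk_same ltnSn.
rewrite upd_blk_other // ltnS leq_eqVlt Hw.
by rewrite (_ : (k == r :> nat) = false) //; apply: contraNF ne => /eqP e; apply/eqP/val_inj.
Qed.

Lemma conv_sub S (T : pt -> Prop) y : (forall v, S v -> T v) -> conv S y -> conv T y.
Proof. by move=> ST [N [l [s [l_ge0 l_sum Ss E1 E2]]]]; exists N, l, s; split=> // i; apply: ST. Qed.

Lemma sum_split N1 N2 (F : 'I_N1 + 'I_N2 -> R) :
  \sum_(i < N1 + N2) F (split i) = \sum_(a < N1) F (inl a) + \sum_(b < N2) F (inr b).
Proof.
rewrite big_split_ord; congr (_ + _); apply: eq_bigr => a _.
  by rewrite (unsplitK (inl _ a) : split (lshift N2 a) = inl a).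
by rewrite (unsplitK (inr _ a) : split (rshift N1 a) = inr a).
Qed.

Lemma conv_convex S v1 v2 t w : conv S v1 -> conv S v2 -> 0 <= t <= 1 ->
  (forall k j, w.1 k j = t * v1.1 k j + (1 - t) * v2.1 k j) ->
  (forall j, w.2 j = t * v1.2 j + (1 - t) * v2.2 j) -> conv S w.
Proof.
case=> N1 [l1 [s1 [A1 A2 A3 A4 A5]]]; case=> N2 [l2 [s2 [B1 B2 B3 B4 B5]]].
move=> /andP[t0 t1] E1 E2.
pose L (s : 'I_N1 + 'I_N2) := match s with inl a => t * l1 a | inr b => (1 - t) * l2 b end.
pose P (s : 'I_N1 + 'I_N2) := match s with inl a => s1 a | inr b => s2 b end.
exists (N1 + N2), (fun i => L (split i)), (fun i => P (split i)); split.
- by move=> i; rewrite /L; case: (split i) => a; rewrite mulr_ge0 ?subr_ge0.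
- by rewrite (sum_split L) /L -!mulr_sumr A2 B2 !mulr1 addrC subrK.
- by move=> i; rewrite /P; case: (split i).
- move=> k j; rewrite (sum_split (fun s => L s * (P s).1 k j)) /L /P E1 A4 B4.
  by rewrite !mulr_sumr; congr (_ + _); apply: eq_bigr => a _; rewrite mulrA.
- move=> j; rewrite (sum_split (fun s => L s * (P s).2 j)) /L /P E2 A5 B5.
  by rewrite !mulr_sumr; congr (_ + _); apply: eq_bigr => a _; rewrite mulrA.
Qed.

Lemma conv_upd_blk_monomial S k (g : 'I_(n k) -> R) (h : 'I_(n k) -> 'I_(n k)) v :
  (forall w, S w -> S (upd_blk w k (fun j => g j * w.1 k (h j)))) ->
  conv S v -> conv S (upd_blk v k (fun j => g j * v.1 k (h j))).
Proof.
move=> HS [N [l [s [l_ge0 l_sum Ss E1 E2]]]].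
exists N, l, (fun i => upd_blk (s i) k (fun j => g j * (s i).1 k (h j))); split => //.
- by move=> i; apply: HS.
- move=> k'; have [->|ne] := eqVneq k' k => j; rewrite ?upd_blk_same ?upd_blk_other // E1.
    by rewrite mulr_sumr; apply: eq_bigr => i _; rewrite upd_blk_same mulrCA.
  by apply: eq_bigr => i _; rewrite upd_blk_other.
Qed.

Definition slice S w k (c : 'I_(n k) -> R) : Prop := conv S (upd_blk w k c).
Arguments slice : clear implicits.

Lemma slice_self S w k : conv S w -> slice S w k (w.1 k).
Proof. by rewrite /slice upd_blk_id. Qed.

Lemma slice_convex S w k a b t : slice S w k a -> slice S w k b -> 0 <= t <= 1 ->
  slice S w k (fun i => t * a i + (1 - t) * b i).
Proof.
move=> Ca Cb t01; apply: (conv_convex Ca Cb t01) => [k' j|j]; last by rewrite !upd_blk_snd; ring.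
have [e|ne] := eqVneq k' k; last by rewrite !upd_blk_other //; ring.
by move: j; rewrite e => j; rewrite !upd_blk_same.
Qed.

Lemma slice_perm S w k : perm_invariant S k ->
  forall a (s : 'S_(n k)), slice S w k a -> slice S w k (fun i => a (s i)).
Proof.
move=> PI a s Ca; have := conv_upd_blk_monomial (g := fun _ => 1) (h := s) _ Ca.
rewrite /slice upd_blk_upd upd_blk_same.
have -> : (fun j => 1 * a (s j)) = (fun j => a (s j)).
  by apply: functional_extensionality => j; rewrite mul1r.
apply=> v Sv; apply: (PI v _ Sv) => [k' ne j|//|]; first by rewrite upd_blk_other.
by exists s => j; rewrite upd_blk_same mul1r.
Qed.

Lemma slice_flip S w k : sign_invariant S k -> forall a j0, slice S w k a ->
  slice S w k (fun i => (if i == j0 then -1 else 1) * a i).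
Proof.
move=> SI a j0 Ca.
have := conv_upd_blk_monomial (g := fun i => if i == j0 then -1 else 1) (h := id) _ Ca.
rewrite /slice upd_blk_upd upd_blk_same; apply=> v Sv.
apply: (SI v _ Sv) => [k' ne j|//|j]; first by rewrite upd_blk_other.
by rewrite upd_blk_same normrM; case: (j == j0); rewrite ?normrN normr1 mul1r.
Qed.

Section NormalForm.
Variables (S : pt -> Prop) (F : forall k, ('I_(n k) -> R) -> 'I_(n k) -> R).
Variables (Q : pt -> Prop) (Rel : forall k, ('I_(n k) -> R) -> ('I_(n k) -> R) -> Prop).
Arguments F : clear implicits.
Arguments Rel : clear implicits.
Hypothesis S_upd_F : forall v k, S v -> S (upd_blk v k (F k (v.1 k))).

Lemma normalize_blocks v : S v -> S ((fun k => F k (v.1 k)), v.2).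
Proof.
case: v => v1 v2 Sv; apply: (blockwise_update (u := v1)) Sv _ => w k Sw wk.
by rewrite /= -wk; exact: S_upd_F.
Qed.

Lemma conv_normal_form :
  (forall v, S v -> Q ((fun k => F k (v.1 k)), v.2)) ->
  (forall k N (l : 'I_N -> R) (f : 'I_N -> 'I_(n k) -> R), (forall i, 0 <= l i) ->
     Rel k (fun j => \sum_(i < N) l i * F k (f i) j) (fun j => \sum_(i < N) l i * f i j)) ->
  (forall w k c, conv S w -> Rel k (w.1 k) c -> conv S (upd_blk w k c)) ->
  forall y, conv S y <->
    exists u, conv (fun v => S v /\ Q v) (u, y.2) /\ forall k, Rel k (u k) (y.1 k).
Proof.
move=> QF Rel_comb Rel_conv y; split.
- case=> N [l [s [l_ge0 l_sum Ss E1 E2]]].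
  exists (fun k j => \sum_(i < N) l i * F k ((s i).1 k) j); split.
    exists N, l, (fun i => ((fun k => F k ((s i).1 k)), (s i).2)); split => //.
    by move=> i; split; [apply: normalize_blocks | apply: QF].
  move=> k; rewrite (_ : y.1 k = fun j => \sum_(i < N) l i * (s i).1 k j); first exact: Rel_comb.
  by apply: functional_extensionality => j; rewrite E1.
- case: y => y1 y2 [u [Cu Rel_u]].
  apply: (blockwise_update (u := u)) (conv_sub _ Cu) _ => [v [] //|w k Cw wk].
  by apply: Rel_conv; rewrite // wk.
Qed.

End NormalForm.
End Blocks.
Arguments upd_blk {R m n p} v k f.
Arguments slice {R m n p} S w k c.

Section Combinations.
Variables (R : realFieldType) (q N : nat) (l : 'I_N -> R).
Hypothesis l_ge0 : forall i, 0 <= l i.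

Lemma topsum_comb_dsort (f : 'I_N -> 'I_q -> R) j : (j <= q)%N ->
  topsum (fun a => \sum_(i < N) l i * dsort (f i) a) j = \sum_(i < N) l i * topsum (f i) j.
Proof.
move=> jq; have Du : in_Delta (fun a => \sum_(i < N) l i * dsort (f i) a).
  by apply: in_Delta_comb => // i; exact: dsort_Delta.
rewrite topsum_Delta // psum_comb.
by apply: eq_bigr => i _; rewrite topsum_dsort.
Qed.

Lemma abs_comb_le (f : 'I_N -> 'I_q -> R) a :
  `|\sum_(i < N) l i * f i a| <= \sum_(i < N) l i * `|f i a|.
Proof.
apply: le_trans (ler_norm_sum _ _ _) _.
by apply: ler_sum => i _; rewrite normrM ger0_norm.
Qed.

Lemma majorizes_comb_dsort (f : 'I_N -> 'I_q -> R) :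
  majorizes (fun a => \sum_(i < N) l i * dsort (f i) a) (fun a => \sum_(i < N) l i * f i a).
Proof.
split=> [j /ltnW jq|]; first by rewrite topsum_comb_dsort // topsum_comb_le.
rewrite topsum_comb_dsort // topsum_full exchange_big; apply: eq_bigr => i _.
by rewrite -mulr_sumr topsum_full.
Qed.

Lemma wmajorizes_comb_dsort_abs (f : 'I_N -> 'I_q -> R) :
  wmajorizes (fun a => \sum_(i < N) l i * dsort (fun b => `|f i b|) a)
             (fun a => `|\sum_(i < N) l i * f i a|).
Proof.
move=> j jq; rewrite topsum_comb_dsort //.
apply: le_trans (topsum_comb_le (fun i b => `|f i b|) jq l_ge0).
by apply: ler_topsum => // a; exact: abs_comb_le.
Qed.

End Combinations.

Section ConvexHulls.
Variables (R : realFieldType) (m : nat) (n : 'I_m -> nat) (p : nat).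
Variable S : point R m n p -> Prop.

Lemma perm_invariant_dsort k v : perm_invariant S k -> S v ->
  S (upd_blk v k (dsort (v.1 k))).
Proof.
move=> PI Sv; apply: (PI v _ Sv) => [k' ne j|//|]; first by rewrite upd_blk_other.
by have [s ->] := dsort_perm (v.1 k); exists s => j; rewrite upd_blk_same.
Qed.

Lemma sign_invariant_abs k v : sign_invariant S k -> S v ->
  S (upd_blk v k (fun j => `|v.1 k j|)).
Proof.
move=> SI Sv; apply: (SI v _ Sv) => [k' ne j|//|j]; first by rewrite upd_blk_other.
by rewrite upd_blk_same normr_id.
Qed.

Lemma conv_perm_invariant : (forall k, perm_invariant S k) ->
  forall y : point R m n p,
    conv S y <->
    exists u : forall k : 'I_m, 'I_(n k) -> R,
      conv (fun v : point R m n p => S v /\ forall k, in_Delta (v.1 k)) (u, y.2)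
      /\ forall k, majorizes (u k) (y.1 k).
Proof.
move=> PI; apply: (conv_normal_form (F := fun k => @dsort R (n k))
  (Q := fun v => forall k, in_Delta (v.1 k)) (Rel := fun k a c => majorizes a c)).
- by move=> v k; exact: perm_invariant_dsort.
- by move=> v _ k; exact: dsort_Delta.
- by move=> k N l f l_ge0; exact: majorizes_comb_dsort.
- move=> w k c Cw; apply: perm_closed_majorized (slice_self k Cw).
    exact: slice_convex.
  exact: slice_perm.
Qed.

Lemma conv_sign_invariant : (forall k, sign_invariant S k) ->
  forall y : point R m n p,
    conv S y <->
    exists u : forall k : 'I_m, 'I_(n k) -> R,
      conv (fun v : point R m n p => S v /\ forall k j, 0 <= v.1 k j) (u, y.2)
      /\ forall k j, `|y.1 k j| <= u k j.
Proof.
move=> SI; apply: (conv_normal_form (F := fun k x j => `|x j|)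
  (Q := fun v => forall k j, 0 <= v.1 k j) (Rel := fun k a c => forall j, `|c j| <= a j)).
- by move=> v k; exact: sign_invariant_abs.
- by move=> v _ k j; exact: normr_ge0.
- by move=> k N l f l_ge0 j; exact: abs_comb_le.
- move=> w k c Cw le_cw; apply: sign_closed_abs_le (slice_self k Cw) _.
  + exact: slice_convex.
  + exact: slice_flip.
  + by move=> j; apply: le_trans (le_cw j) (ler_norm _).
Qed.

Lemma conv_perm_sign_invariant :
  (forall k, perm_invariant S k /\ sign_invariant S k) ->
  forall y : point R m n p,
    conv S y <->
    exists u : forall k : 'I_m, 'I_(n k) -> R,
      conv (fun v : point R m n p =>
              S v /\ forall k, in_Delta (v.1 k) /\ forall j, 0 <= v.1 k j)
           (u, y.2)
      /\ forall k, wmajorizes (u k) (fun j => `|y.1 k j|).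
Proof.
move=> PSI; apply: (conv_normal_form (F := fun k x => dsort (fun j => `|x j|))
  (Q := fun v => forall k, in_Delta (v.1 k) /\ forall j, 0 <= v.1 k j)
  (Rel := fun k a c => wmajorizes a (fun j => `|c j|))).
- move=> v k Sv; have [PI SI] := PSI k.
  by have := perm_invariant_dsort PI (sign_invariant_abs SI Sv); rewrite upd_blk_upd upd_blk_same.
- move=> v _ k; split; first exact: dsort_Delta.
  by apply: dsort_ge0 => j; exact: normr_ge0.
- by move=> k N l f l_ge0; exact: wmajorizes_comb_dsort_abs.
- move=> w k c Cw; have [PI SI] := PSI k.
  apply: sign_perm_closed_wmajorized (slice_self k Cw).
  + exact: slice_convex.
  + exact: slice_flip.
  + exact: slice_perm.
Qed.

End ConvexHulls.

Unset Implicit Arguments.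

Theorem theorem4 (R : realFieldType) (m : nat) (n : 'I_m -> nat) (p : nat)
    (S : point R m n p -> Prop) :
  ((forall k, perm_invariant S k) ->
     forall y : point R m n p,
       conv S y <->
       exists u : forall k : 'I_m, 'I_(n k) -> R,
         conv (fun v : point R m n p => S v /\ forall k, in_Delta (v.1 k)) (u, y.2)
         /\ forall k, majorizes (u k) (y.1 k))
  /\
  ((forall k, sign_invariant S k) ->
     forall y : point R m n p,
       conv S y <->
       exists u : forall k : 'I_m, 'I_(n k) -> R,
         conv (fun v : point R m n p => S v /\ forall k j, 0 <= v.1 k j) (u, y.2)
         /\ forall k j, `|y.1 k j| <= u k j)
  /\
  ((forall k, perm_invariant S k /\ sign_invariant S k) ->
     forall y : point R m n p,
       conv S y <->
       exists u : forall k : 'I_m, 'I_(n k) -> R,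
         conv (fun v : point R m n p =>
                 S v /\ forall k, in_Delta (v.1 k) /\ forall j, 0 <= v.1 k j)
              (u, y.2)
         /\ forall k, wmajorizes (u k) (fun j => `|y.1 k j|)).
Proof.
split; first exact: conv_perm_invariant.
split; first exact: conv_sign_invariant.
exact: conv_perm_sign_invariant.
Qed.
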